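(* Let $P$ and $Q$ be recurrent stochastic matrices over a countable set $\Omega$, and let $\rho$ be a *-automorphism of $\ell^\infty(\Omega)$. If there is a $\rho$-unitary isomorphism $Arv(P)\to Arv(Q)$, then $P_{ij}=Q_{\sigma_\rho(i)\sigma_\rho(j)}$ for all $i,j\in\Omega$.
   Context: A stochastic matrix over $\Omega$ has nonnegative entries and row sums $1$; $P^{(n)}_{ij}$ is the $(i,j)$ entry of $P^n$; $P$ is recurrent if $\sum_{n\ge1}P^{(n)}_{ii}=\infty$ for all $i$. $\sigma_\rho$ is the permutation of $\Omega$ with $\rho(p_j)=p_{\sigma_\rho(j)}$, $p_j$ the indicator of $\{j\}$. $Arv(P)$: $Arv(P)_0=\ell^\infty(\Omega)$; $Arv(P)_n$ ($n\ge1$) is the set of complex $\Omega\times\Omega$ matrices $A=[a_{ij}]$ with $a_{ij}=0$ whenever $P^{(n)}_{ij}=0$ and $\sup_j\sum_i|a_{ij}|^2<\infty$, a W*-correspondence over $\ell^\infty(\Omega)$ with actions by diagonal matrices and inner product $\mathrm{Diag}(A^*B)$; $U^P_{n,m}(A\otimes B)=(\sqrt{P^{n+m}})^{\flat}*[(\sqrt{P^n}*A)(\sqrt{P^m}*B)]$ for $n,m\ge1$ ($*$ entrywise product, $\sqrt\cdot$ entrywise, $M^\flat_{ik}=M_{ik}^{-1}$ if $M_{ik}>0$, else $0$), $U_{0,n},U_{n,0}$ module actions. A $\rho$-unitary isomorphism $V:Arv(P)\to Arv(Q)$ is a family $(V_n)$ with $V_0=\rho$, each $V_n$ ($n\ge1$)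 surjective linear with $V_n(a\xi b)=\rho(a)V_n(\xi)\rho(b)$ and $\rho^{-1}(\langle V_n\xi,V_n\eta\rangle)=\langle\xi,\eta\rangle$, and $V_{n+m}U^P_{n,m}=U^Q_{n,m}(V_n\otimes V_m)$. *)

From Stdlib Require Import Reals.
From Coquelicot Require Import Coquelicot.
From mathcomp Require Import ssreflect ssrfun ssrbool eqtype choice.

Set Implicit Arguments.
Unset Strict Implicit.

Section Defs.
Variable Om : countType.

Definition enc (f : Om -> R) (n : nat) : R :=
  match @pickle_inv Om n with Some x => f x | None => 0%R end.

(* sum over Om (used only for absolutely convergent families) *)
Definition sumR (f : Om -> R) : R := Series (enc f).
Definition sumC (f : Om -> C) : C :=
  (sumR (fun x => Re (f x)), sumR (fun x => Im (f x))).

Definition stochastic (P : Om -> Om -> R) : Prop :=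
  (forall i j, 0 <= P i j)%R /\ (forall i, is_series (enc (P i)) 1%R).

Fixpoint mpow (P : Om -> Om -> R) (n : nat) (i k : Om) : R :=
  match n with
  | O => if i == k then 1%R else 0%R
  | S n' => sumR (fun j => (mpow P n' i j * P j k)%R)
  end.

Definition recurrent (P : Om -> Om -> R) : Prop :=
  forall i, is_lim_seq (sum_n (fun n => mpow P (S n) i i)) p_infty.

Definition linfty (f : Om -> C) : Prop := exists M, forall x, (Cmod (f x) <= M)%R.

Definition star_automorphism (rho : (Om -> C) -> (Om -> C)) : Prop :=
  (forall f, linfty f -> linfty (rho f)) /\
  (forall f g, linfty f -> linfty g ->
     forall x, rho (fun y => f y + g y)%C x = (rho f x + rho g x)%C) /\
  (forall (c : C) f, linfty f ->
     forall x, rho (fun y => c * f y)%C x = (c * rho f x)%C) /\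
  (forall f g, linfty f -> linfty g ->
     forall x, rho (fun y => f y * g y)%C x = (rho f x * rho g x)%C) /\
  (forall f, linfty f ->
     forall x, rho (fun y => Cconj (f y)) x = Cconj (rho f x)) /\
  (forall f g, linfty f -> linfty g ->
     (forall x, rho f x = rho g x) -> forall x, f x = g x) /\
  (forall g, linfty g -> exists f, linfty f /\ forall x, rho f x = g x).

Definition proj (j : Om) : Om -> C := fun x => if x == j then 1%C else 0%C.

Definition Arv (P : Om -> Om -> R) (n : nat) (A : Om -> Om -> C) : Prop :=
  (forall i j, mpow P n i j = 0%R -> A i j = 0%C) /\
  (exists M, forall j N, (sum_n (enc (fun i => (Cmod (A i j) ^ 2)%R)) N <= M)%R).

Definition inner (A B : Om -> Om -> C) : Om -> C :=
  fun j => sumC (fun i => (Cconj (A i j) * B i j)%C).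

Definition flat (x : R) : R := if Rlt_dec 0 x then (/ x)%R else 0%R.

Definition Umap (P : Om -> Om -> R) (n m : nat) (A B : Om -> Om -> C) : Om -> Om -> C :=
  fun i k =>
    (RtoC (flat (sqrt (mpow P (n + m) i k))) *
     sumC (fun j => (RtoC (sqrt (mpow P n i j)) * A i j) *
                    (RtoC (sqrt (mpow P m j k)) * B j k)))%C.

(* rho-unitary isomorphism V : Arv(P) -> Arv(Q); V_0 = rho, and V n for n >= 1 *)
Definition rho_unitary_iso (P Q : Om -> Om -> R) (rho : (Om -> C) -> (Om -> C))
  (V : nat -> (Om -> Om -> C) -> (Om -> Om -> C)) : Prop :=
  (forall n, (1 <= n)%nat -> forall A, Arv P n A -> Arv Q n (V n A)) /\
  (forall n, (1 <= n)%nat -> forall B, Arv Q n B ->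
     exists A, Arv P n A /\ forall i j, V n A i j = B i j) /\
  (forall n, (1 <= n)%nat -> forall (c : C) A B, Arv P n A -> Arv P n B ->
     forall i j, V n (fun i j => A i j + c * B i j)%C i j = (V n A i j + c * V n B i j)%C) /\
  (forall n, (1 <= n)%nat -> forall a b A, linfty a -> linfty b -> Arv P n A ->
     forall i j, V n (fun i j => a i * A i j * b j)%C i j = (rho a i * V n A i j * rho b j)%C) /\
  (forall n, (1 <= n)%nat -> forall A B, Arv P n A -> Arv P n B ->
     forall j, inner (V n A) (V n B) j = rho (inner A B) j) /\
  (forall n m, (1 <= n)%nat -> (1 <= m)%nat -> forall A B, Arv P n A -> Arv P m B ->
     forall i k, V (n + m)%nat (Umap P n m A B) i k = Umap Q n m (V n A) (V m B) i k).

End Defs.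

(* A rho-unitary isomorphism sends each matrix unit E_ij of Arv(P)_n to a unimodular
   multiple of E_(sigma i)(sigma j), so P^n and Q^n have the same support up to sigma,
   and compatibility with the maps U_(n,m) makes the ratios
   r_n(i, k) = P^n(i, k) / Q^n(sigma i, sigma k) multiplicative along paths:
   r_(n+m)(i, k) = r_n(i, j) r_m(j, k).  Around a loop the ratio is geometric, and
   recurrence of P and of Q forces the rate to be 1; since in a recurrent chain every
   state reached from y leads back to y, r_n(y, x) = h(y, x) does not depend on n.
   An edge with r_1(y, k) > 1 would make min(1/h(y, .), 1) a bounded superharmonic
   function for P, strict at y, which recurrence forbids; an edge with r_1(y, k) < 1
   would give the row of Q at sigma y a mass larger than 1.  Hence r_1 = 1 on every
   edge, which is the claim. *)

From Stdlib Require Import Reals Lra Lia Classical ClassicalEpsilon FunctionalExtensionality.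
From Coquelicot Require Import Coquelicot.
From mathcomp Require Import ssreflect ssrfun ssrbool eqtype choice.

Open Scope R_scope.

(** * Series of nonnegative terms *)

Lemma sum_n_ge0 (a : nat -> R) : (forall n, 0 <= a n) -> forall N, 0 <= sum_n a N.
Proof.
move=> Ha; elim=> [|N IH]; first by rewrite sum_O.
rewrite sum_Sn /plus /=; have := Ha (S N); lra.
Qed.

Lemma sum_n_monotone (a : nat -> R) : (forall n, 0 <= a n) ->
  forall n m, (n <= m)%nat -> sum_n a n <= sum_n a m.
Proof.
move=> Ha n m; elim=> [|k _ IH]; first lra.
rewrite sum_Sn /plus /=; have := Ha (S k); lra.
Qed.

Lemma sum_n_le (a b : nat -> R) N : (forall n, a n <= b n) -> sum_n a N <= sum_n b N.
Proof.
move=> Hab; elim: N => [|N IH]; first by rewrite !sum_O.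
rewrite !sum_Sn /plus /=; have := Hab (S N); lra.
Qed.

Lemma sum_n_le_Series (a : nat -> R) : (forall n, 0 <= a n) -> ex_series a ->
  forall N, sum_n a N <= Series a.
Proof.
move=> Ha [l Hl] N; rewrite (is_series_unique _ _ Hl).
apply: (is_lim_seq_incr_compare _ _ Hl) => n; rewrite sum_Sn /plus /=.
have := Ha (S n); lra.
Qed.

Lemma Series_ge0 (a : nat -> R) : (forall n, 0 <= a n) -> ex_series a -> 0 <= Series a.
Proof.
move=> Ha Hs; apply: Rle_trans (Ha O) _.
by have := sum_n_le_Series _ Ha Hs O; rewrite sum_O.
Qed.

Lemma ex_series_bounded (a : nat -> R) (B : R) : (forall n, 0 <= a n) ->
  (forall N, sum_n a N <= B) -> ex_series a /\ Series a <= B.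
Proof.
move=> Ha HB.
have [l Hl] : ex_lim_seq (sum_n a).
{ apply: ex_lim_seq_incr => n; apply: sum_n_monotone => //; lia. }
have H1 : Rbar_le (Lim_seq (sum_n a)) (Lim_seq (fun _ => B)).
{ apply: Lim_seq_le_loc; by exists O. }
have H2 : Rbar_le (Lim_seq (fun _ => sum_n a O)) (Lim_seq (sum_n a)).
{ apply: Lim_seq_le_loc; exists O => n _; apply: sum_n_monotone => //; lia. }
rewrite Lim_seq_const (is_lim_seq_unique _ _ Hl) in H1.
rewrite Lim_seq_const (is_lim_seq_unique _ _ Hl) in H2.
case: l Hl H1 H2 => [r| |] Hl /= H1 H2; try contradiction.
split; first by exists r.
by rewrite /Series (is_lim_seq_unique _ _ Hl).
Qed.

Lemma sum_n_shift_le (a : nat -> R) s : (forall n, 0 <= a n) ->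
  forall N, sum_n (fun n => a (n + s)%nat) N <= sum_n a (N + s).
Proof.
move=> Ha; elim=> [|N IH] /=.
- rewrite sum_O; case: s => [|s]; first by rewrite sum_O; apply: Rle_refl.
  rewrite sum_Sn /plus /=; have := sum_n_ge0 _ Ha s; lra.
- rewrite !sum_Sn /plus /=; lra.
Qed.

Lemma is_series_indicator (v : R) m : is_series (fun n => if Nat.eqb n m then v else 0) v.
Proof.
have Hpart : forall N, @eq R (sum_n (fun n => if Nat.eqb n m then v else 0) N)
                              (if Nat.leb m N then v else 0).
{ elim=> [|N IH]; first by rewrite sum_O; case: m.
  rewrite sum_Sn IH; change (plus ?x ?y) with (Rplus x y).
  case: (Nat.eqb_spec (S N) m) => [<-|Hm].
  - rewrite Nat.leb_refl; have -> : Nat.leb (S N) N = false by apply/Nat.leb_gt; lia.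
    ring.
  - case: (Nat.leb_spec m N) => HmN; case: (Nat.leb_spec m (S N)) => HmSN; try lia; ring. }
suff Hlim : is_lim_seq (sum_n (fun n => if Nat.eqb n m then v else 0)) v by exact: Hlim.
apply: (is_lim_seq_ext_loc (fun _ => v)); last exact: is_lim_seq_const.
exists m => N HN; rewrite Hpart.
by have -> : Nat.leb m N = true by apply/Nat.leb_le.
Qed.

Lemma sum_n_geom_le (c : R) N : 0 <= c < 1 -> sum_n (fun n => c ^ (S n)) N <= / (1 - c).
Proof.
move=> Hc.
have Hgeom : is_series (fun n => c ^ n) (/ (1 - c)).
{ apply: is_series_geom; rewrite Rabs_pos_eq; lra. }
have Hc0 : forall n, 0 <= c ^ n by move=> n; apply: pow_le; lra.
rewrite -(is_series_unique _ _ Hgeom).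
apply: Rle_trans (sum_n_le_Series _ Hc0 (ex_intro _ _ Hgeom) (N + 1)).
have := sum_n_shift_le _ 1 Hc0 N.
by rewrite (sum_n_ext _ (fun n => c ^ S n)) // => n; rewrite Nat.add_1_r.
Qed.

Lemma lim_p_infty_unbounded (u : nat -> R) (B : R) :
  is_lim_seq u p_infty -> ~ (forall N, u N <= B).
Proof.
move=> /is_lim_seq_spec Hu HB; have [N HN] := Hu B.
have := HN N (le_n N); have := HB N; lra.
Qed.

(** * Sums over a countable type *)

Section CountableSums.
Context {Om : countType}.
Implicit Types f g : Om -> R.

Definition summable f := ex_series (enc f).

Lemma enc_pickle f x : enc f (pickle x) = f x.
Proof. by rewrite /enc pickleK_inv. Qed.

Lemma enc_Some f n x : pickle_inv n = Some x -> enc f n = f x.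
Proof. by rewrite /enc => ->. Qed.

Lemma enc_None f n : @pickle_inv Om n = None -> enc f n = 0.
Proof. by rewrite /enc => ->. Qed.

Lemma enc_ext f g : (forall x, f x = g x) -> forall n, enc f n = enc g n.
Proof. by move=> Hfg n; rewrite /enc; case: pickle_inv. Qed.

Lemma enc_ge0 f : (forall x, 0 <= f x) -> forall n, 0 <= enc f n.
Proof. move=> Hf n; rewrite /enc; case: pickle_inv => //; lra. Qed.

Lemma enc_le f g : (forall x, 0 <= f x <= g x) -> forall n, 0 <= enc f n <= enc g n.
Proof. move=> Hfg n; rewrite /enc; case: pickle_inv => //; lra. Qed.

Lemma enc_scal f k n : enc (fun x => k * f x) n = k * enc f n.
Proof. rewrite /enc; case: pickle_inv => //; ring. Qed.

Lemma enc_plus f g n : enc (fun x => f x + g x) n = enc f n + enc g n.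
Proof. rewrite /enc; case: pickle_inv => //; ring. Qed.

Lemma enc_minus f g n : enc (fun x => f x - g x) n = enc f n - enc g n.
Proof. rewrite /enc; case: pickle_inv => //; ring. Qed.

Lemma enc_single f x0 : (forall x, x <> x0 -> f x = 0) ->
  forall n, enc f n = if Nat.eqb n (pickle x0) then f x0 else 0.
Proof.
move=> Hf n; rewrite /enc; case E: (pickle_inv n) => [x|].
- have Hn : n = pickle x by have := @pickle_invK Om n; rewrite E.
  case: (Nat.eqb_spec n (pickle x0)) => [Hx0|Hx0].
  + by have -> : x = x0 by apply: (pcan_inj (@pickleK Om)); rewrite -Hn.
  + by apply: Hf => Hx; apply: Hx0; rewrite Hn Hx.
- case: (Nat.eqb_spec n (pickle x0)) => // Hn.
  by rewrite Hn pickleK_inv in E.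
Qed.

Lemma summable_le f g : (forall x, 0 <= f x <= g x) -> summable g -> summable f.
Proof.
move=> Hfg Hg; apply: (ex_series_le _ _ _ Hg) => n.
have := enc_le _ _ Hfg n; rewrite /norm /= /abs /= => Hn; rewrite Rabs_pos_eq; lra.
Qed.

Lemma summable_scal f k : summable f -> summable (fun x => k * f x).
Proof.
move=> Hf; apply: (ex_series_ext (fun n => k * enc f n)); first by move=> n; rewrite enc_scal.
exact: (ex_series_scal_l k).
Qed.

Lemma summable_plus f g : summable f -> summable g -> summable (fun x => f x + g x).
Proof.
move=> Hf Hg; apply: (ex_series_ext (fun n => enc f n + enc g n)).
  by move=> n; rewrite enc_plus.
exact: (ex_series_plus _ _ Hf Hg).
Qed.

Lemma summable_minus f g : summable f -> summable g -> summable (fun x => f x - g x).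
Proof.
move=> Hf Hg; apply: (ex_series_ext (fun n => enc f n + - enc g n)).
  by move=> n; rewrite enc_minus.
exact: (ex_series_plus _ _ Hf (ex_series_opp _ Hg)).
Qed.

Lemma summable_mul_bounded f g (U : R) : (forall x, 0 <= f x) -> summable f ->
  (forall x, 0 <= g x <= U) -> summable (fun x => f x * g x).
Proof.
move=> Hf Hf_sum Hg; apply: (summable_le _ (fun x => U * f x)); last exact: summable_scal.
move=> x; have := Hg x; have := Hf x; split; nra.
Qed.

Lemma is_series_enc_single f x0 : (forall x, x <> x0 -> f x = 0) -> is_series (enc f) (f x0).
Proof.
move=> Hf; apply: (is_series_ext _ _ _ _ (is_series_indicator (f x0) (pickle x0))) => n.
by rewrite (enc_single _ _ Hf).
Qed.

Lemma summable_single f x0 : (forall x, x <> x0 -> f x = 0) -> summable f.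
Proof. by move=> Hf; exists (f x0); apply: is_series_enc_single. Qed.

Lemma sumR_single f x0 : (forall x, x <> x0 -> f x = 0) -> sumR f = f x0.
Proof. by move=> Hf; apply: is_series_unique; apply: is_series_enc_single. Qed.

Lemma sumR_zero f : (forall x, f x = 0) -> sumR f = 0.
Proof.
move=> Hf; apply: is_series_unique.
apply: (is_series_ext _ _ _ _ (is_series_indicator 0 O)) => n.
by rewrite /enc; case: pickle_inv => [x|]; rewrite ?Hf; case: Nat.eqb.
Qed.

Lemma sumR_ext f g : (forall x, f x = g x) -> sumR f = sumR g.
Proof. by move=> Hfg; apply: Series_ext; apply: enc_ext. Qed.

Lemma sumR_scal f k : sumR (fun x => k * f x) = k * sumR f.
Proof. by rewrite /sumR -Series_scal_l; apply: Series_ext => n; rewrite enc_scal. Qed.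

Lemma sumR_plus f g : summable f -> summable g ->
  sumR (fun x => f x + g x) = sumR f + sumR g.
Proof.
move=> Hf Hg; rewrite /sumR -Series_plus //.
by apply: Series_ext => n; rewrite enc_plus.
Qed.

Lemma sumR_minus f g : summable f -> summable g ->
  sumR (fun x => f x - g x) = sumR f - sumR g.
Proof.
move=> Hf Hg; rewrite /sumR -Series_minus //.
by apply: Series_ext => n; rewrite enc_minus.
Qed.

Lemma sumR_le f g : (forall x, 0 <= f x <= g x) -> summable g -> sumR f <= sumR g.
Proof. move=> Hfg Hg; apply: Series_le => //; exact: enc_le. Qed.

Lemma sumR_ge0 f : (forall x, 0 <= f x) -> summable f -> 0 <= sumR f.
Proof. move=> Hf Hs; apply: Series_ge0 => //; exact: enc_ge0. Qed.

Lemma le_sumR f : (forall x, 0 <= f x) -> summable f -> forall x, f x <= sumR f.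
Proof.
move=> Hf Hs x; rewrite -(enc_pickle f x).
apply: Rle_trans (sum_n_le_Series _ (enc_ge0 _ Hf) Hs (pickle x)).
case: (pickle x) => [|n]; first by rewrite sum_O; apply: Rle_refl.
rewrite sum_Sn /plus /=; have := sum_n_ge0 _ (enc_ge0 _ Hf) n; lra.
Qed.

Lemma sumC_single (f : Om -> C) x0 : (forall x, x <> x0 -> f x = 0%C) -> sumC f = f x0.
Proof.
move=> Hf; rewrite /sumC (sumR_single (fun x => Re (f x)) x0) ?(sumR_single (fun x => Im (f x)) x0).
- by case: (f x0).
- by move=> x Hx; rewrite Hf.
- by move=> x Hx; rewrite Hf.
Qed.

Lemma sumC_zero (f : Om -> C) : (forall x, f x = 0%C) -> sumC f = 0%C.
Proof. by move=> Hf; rewrite /sumC !sumR_zero // => x; rewrite Hf. Qed.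

Lemma summable_sum_n (F : nat -> Om -> R) N : (forall n, summable (F n)) ->
  summable (fun x => sum_n (fun n => F n x) N).
Proof.
move=> HF; elim: N => [|N IH].
- apply: (ex_series_ext (enc (F O))) => [n|]; last exact: HF.
  by apply: enc_ext => x; rewrite sum_O.
- apply: (ex_series_ext (enc (fun x => sum_n (fun n => F n x) N + F (S N) x))).
    by move=> n; apply: enc_ext => x; rewrite sum_Sn.
  exact: summable_plus.
Qed.

Lemma sumR_sum_n (F : nat -> Om -> R) N : (forall n, summable (F n)) ->
  sumR (fun x => sum_n (fun n => F n x) N) = sum_n (fun n => sumR (F n)) N.
Proof.
move=> HF; elim: N => [|N IH].
- by rewrite sum_O; apply: sumR_ext => x; rewrite sum_O.
- rewrite sum_Sn -IH (sumR_ext _ (fun x => sum_n (fun n => F n x) N + F (S N) x)).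
  + exact: sumR_plus (summable_sum_n _ _ HF) (HF _).
  + by move=> x; rewrite sum_Sn.
Qed.

Lemma enc_sumR_mul (a : Om -> R) (b : Om -> Om -> R) (c : Om -> R) n :
  enc (fun x => sumR (fun y => a y * b y x) * c x) n =
  sumR (fun y => a y * enc (fun x => b y x * c x) n).
Proof.
case E: (@pickle_inv Om n) => [x|].
- rewrite (enc_Some _ _ _ E) Rmult_comm -sumR_scal; apply: sumR_ext => y.
  by rewrite (enc_Some _ _ _ E); ring.
- by rewrite (enc_None _ _ E) sumR_zero // => y; rewrite (enc_None _ _ E) Rmult_0_r.
Qed.

(* Tonelli's theorem, in the one direction needed, for a substochastic kernel [b]. *)
Lemma sumR_swap_le (a : Om -> R) (b : Om -> Om -> R) (c : Om -> R) (M : R) :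
  (forall y, 0 <= a y) -> summable a ->
  (forall y x, 0 <= b y x) -> (forall y, summable (b y)) -> (forall y, sumR (b y) <= 1) ->
  0 <= M -> (forall x, 0 <= c x <= M) ->
  summable (fun x => sumR (fun y => a y * b y x) * c x) /\
  sumR (fun x => sumR (fun y => a y * b y x) * c x) <=
  sumR (fun y => a y * sumR (fun x => b y x * c x)).
Proof.
move=> Ha Ha_sum Hb Hb_sum Hb1 HM Hc.
have Hb_le1 : forall y x, b y x <= 1.
{ by move=> y x; apply: Rle_trans (le_sumR _ (Hb y) (Hb_sum y) x) (Hb1 y). }
have Hbc : forall y x, 0 <= b y x * c x <= M * b y x.
{ move=> y x; have := Hc x; have := Hb y x; split; nra. }
have Hrow : forall y, summable (fun x => b y x * c x).
{ move=> y; apply: summable_le (Hbc y) (summable_scal _ _ (Hb_sum y)). }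
have Hay : forall k, (forall y, 0 <= k y <= M) -> summable (fun y => a y * k y).
{ by move=> k; apply: summable_mul_bounded. }
pose e n y := enc (fun x => b y x * c x) n.
have He : forall n y, 0 <= e n y <= M.
{ move=> n y; rewrite /e /enc; case: pickle_inv => [x|]; last lra.
  have := Hbc y x; have := Hb_le1 y x; have := Hb y x; split; nra. }
have Hpartial : forall N y, 0 <= sum_n (fun n => e n y) N <= sumR (fun x => b y x * c x).
{ move=> N y; split; first by apply: sum_n_ge0 => n; case: (He n y).
  exact: (sum_n_le_Series _ (enc_ge0 _ (fun x => proj1 (Hbc y x))) (Hrow y)). }
have Hrow_le : forall y, sumR (fun x => b y x * c x) <= M.
{ move=> y; apply: Rle_trans (sumR_le _ _ (Hbc y) (summable_scal _ _ (Hb_sum y))) _.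
  rewrite sumR_scal; have := Hb1 y; have := sumR_ge0 _ (Hb y) (Hb_sum y); nra. }
have Hterm := enc_sumR_mul a b c.
apply: ex_series_bounded => [n|N].
- rewrite Hterm; apply: sumR_ge0 => [y|]; last exact: (Hay (e n)).
  by apply: Rmult_le_pos; [apply: Ha | case: (He n y)].
- rewrite (sum_n_ext _ _ _ Hterm) -sumR_sum_n => [|n]; last exact: (Hay (e n)).
  apply: sumR_le => [y|]; last first.
    apply: Hay => y; split; last exact: Hrow_le.
    exact: sumR_ge0 (fun x => proj1 (Hbc y x)) (Hrow y).
  rewrite (sum_n_mult_l (a y) (fun n => e n y) N); change (mult ?u ?v) with (u * v).
  have [Hs0 Hs1] := Hpartial N y.
  by split; [apply: Rmult_le_pos | apply: Rmult_le_compat_l].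
Qed.

Lemma sumR_comp_inj_le f (sg : Om -> Om) : injective sg ->
  (forall x, 0 <= f x) -> summable f ->
  summable (fun v => f (sg v)) /\ sumR (fun v => f (sg v)) <= sumR f.
Proof.
move=> Hinj Hf Hf_sum.
pose b x v := if sg v == x then 1 else 0.
have Hb : forall x v, 0 <= b x v by move=> x v; rewrite /b; case: eqP; lra.
have Hrow : forall x, summable (b x) /\ sumR (b x) <= 1.
{ move=> x; case: (classic (exists v0, sg v0 = x)) => [[v0 Hv0]|Hx].
  - have Hs : forall v, v <> v0 -> b x v = 0.
    { move=> v Hv; rewrite /b; case: eqP => // E; case: Hv; apply: Hinj; congruence. }
    split; first exact: summable_single Hs.
    rewrite (sumR_single _ _ Hs) /b Hv0 eqxx; lra.
  - have Hs : forall v, b x v = 0.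
    { by move=> v; rewrite /b; case: eqP => // E; case: Hx; exists v. }
    split; first by apply: (summable_single _ x) => v _.
    rewrite sumR_zero //; lra. }
have Hcol : forall v, sumR (fun x => f x * b x v) * 1 = f (sg v).
{ move=> v; rewrite Rmult_1_r (sumR_single _ (sg v)) /b ?eqxx ?Rmult_1_r // => x Hx.
  by case: eqP => E; [case: Hx | ring]. }
have [Hs Hle] := sumR_swap_le f b (fun _ => 1) 1 Hf Hf_sum Hb (fun x => proj1 (Hrow x))
  (fun x => proj2 (Hrow x)) Rle_0_1 (fun _ => conj Rle_0_1 (Rle_refl 1)).
split; first by apply: (ex_series_ext _ _ _ Hs) => n; apply: enc_ext.
rewrite -(sumR_ext _ _ Hcol); apply: Rle_trans Hle _.
apply: sumR_le => [x|//]; have [Hb_sum Hb1] := Hrow x.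
rewrite (sumR_ext _ (b x)) => [|v]; last ring.
have := sumR_ge0 _ (Hb x) Hb_sum; have := Hf x; split; nra.
Qed.

End CountableSums.

(** * Powers of a stochastic matrix *)

Section StochasticPowers.
Context {Om : countType}.
Variable P : Om -> Om -> R.
Hypothesis HP : stochastic P.

Lemma stochastic_ge0 i j : 0 <= P i j.
Proof. exact: (proj1 HP). Qed.

Lemma stochastic_summable i : summable (P i).
Proof. by exists 1; apply: (proj2 HP). Qed.

Lemma stochastic_sum i : sumR (P i) = 1.
Proof. exact: is_series_unique (proj2 HP i). Qed.

Lemma stochastic_le1 i j : P i j <= 1.
Proof.
by rewrite -(stochastic_sum i); apply: le_sumR; [apply: stochastic_ge0 | apply: stochastic_summable].
Qed.

Lemma mpow0 i k : mpow P 0 i k = if i == k then 1 else 0.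
Proof. by []. Qed.

Lemma mpowS n i k : mpow P (S n) i k = sumR (fun j => mpow P n i j * P j k).
Proof. by []. Qed.

Lemma mpow0_single i k : k <> i -> mpow P 0 i k = 0.
Proof. by move=> Hk; rewrite mpow0; case: eqP => // E; case: Hk. Qed.

Lemma mpow_row n i :
  (forall j, 0 <= mpow P n i j) /\ summable (mpow P n i) /\ sumR (mpow P n i) <= 1.
Proof.
elim: n i => [|n IH] i.
- split; first by move=> j; rewrite mpow0; case: eqP => _; lra.
  split; first exact: summable_single (mpow0_single i).
  rewrite (sumR_single _ _ (mpow0_single i)) mpow0 eqxx; lra.
- have [Hge0 [Hsum Hle1]] := IH i.
  have [Hsum' Hle] := sumR_swap_le _ P (fun _ => 1) 1 Hge0 Hsum stochastic_ge0
    stochastic_summable (fun y => Req_le _ _ (stochastic_sum y)) Rle_0_1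
    (fun _ => conj Rle_0_1 (Rle_refl 1)).
  split.
  + move=> j; rewrite mpowS; apply: sumR_ge0 => [y|].
      exact: Rmult_le_pos (Hge0 y) (stochastic_ge0 y j).
    apply: (summable_le _ (mpow P n i)) Hsum => y.
    have := stochastic_le1 y j; have := stochastic_ge0 y j; have := Hge0 y; split; nra.
  + split.
    * by apply: (ex_series_ext _ _ _ Hsum') => m; apply: enc_ext => x; rewrite Rmult_1_r.
    * rewrite (sumR_ext _ (fun x => sumR (fun y => mpow P n i y * P y x) * 1)) => [|x];
        last by rewrite Rmult_1_r.
      apply: Rle_trans Hle _; rewrite (sumR_ext _ (mpow P n i)) // => y.
      by rewrite (sumR_ext _ (P y)) => [|x]; [rewrite stochastic_sum Rmult_1_r | ring].
Qed.

Lemma mpow_ge0 n i j : 0 <= mpow P n i j.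
Proof. exact: (proj1 (mpow_row n i)). Qed.

Lemma mpow_summable n i : summable (mpow P n i).
Proof. exact: (proj1 (proj2 (mpow_row n i))). Qed.

Lemma mpow_le1 n i j : mpow P n i j <= 1.
Proof.
apply: Rle_trans (proj2 (proj2 (mpow_row n i))).
exact: le_sumR (mpow_ge0 n i) (mpow_summable n i) j.
Qed.

Lemma mpow_summable_mul n i (g : Om -> R) (U : R) : (forall l, 0 <= g l <= U) ->
  summable (fun l => mpow P n i l * g l).
Proof.
exact: summable_mul_bounded (mpow_ge0 n i) (mpow_summable n i).
Qed.

Lemma stochastic_summable_mul i (g : Om -> R) (U : R) : (forall l, 0 <= g l <= U) ->
  summable (fun l => P i l * g l).
Proof.
exact: summable_mul_bounded (stochastic_ge0 i) (stochastic_summable i).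
Qed.

Lemma mpow1 i j : mpow P 1 i j = P i j.
Proof.
rewrite mpowS (sumR_single _ i) ?mpow0 ?eqxx ?Rmult_1_l // => x Hx.
by rewrite mpow0_single // Rmult_0_l.
Qed.

(* Chapman-Kolmogorov, keeping the single intermediate state [j]. *)
Lemma mpow_mul_le a b i j k : mpow P a i j * mpow P b j k <= mpow P (a + b) i k.
Proof.
elim: b k => [|b IH] k.
- rewrite Nat.add_0_r mpow0; case: eqP => [<-|_]; first by rewrite Rmult_1_r; apply: Rle_refl.
  by rewrite Rmult_0_r; apply: mpow_ge0.
- rewrite Nat.add_succ_r !mpowS -sumR_scal.
  apply: sumR_le => [l|]; last first.
    by apply: (mpow_summable_mul _ _ _ 1) => l; split; [apply: stochastic_ge0 | apply: stochastic_le1].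
  have := IH l; have := stochastic_ge0 l k; have := mpow_ge0 a i j; have := mpow_ge0 b j l.
  move=> H1 H2 H3 H4; rewrite -Rmult_assoc; split; first by apply: Rmult_le_pos; nra.
  exact: Rmult_le_compat_r H3 H4.
Qed.

Lemma mpow_add_pos a b i j k : 0 < mpow P a i j -> 0 < mpow P b j k -> 0 < mpow P (a + b) i k.
Proof. by move=> H1 H2; apply: Rlt_le_trans (mpow_mul_le a b i j k); apply: Rmult_lt_0_compat. Qed.

Lemma mpowS_pos n i k : 0 < mpow P (S n) i k -> exists j, 0 < mpow P n i j /\ 0 < P j k.
Proof.
move=> Hpos; apply: NNPP => Hnone.
suff : mpow P (S n) i k = 0 by lra.
rewrite mpowS sumR_zero // => j.
case: (Rle_lt_or_eq_dec _ _ (mpow_ge0 n i j)) => [Hij|<-]; last by rewrite Rmult_0_l.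
case: (Rle_lt_or_eq_dec _ _ (stochastic_ge0 j k)) => [Hjk|<-]; last by rewrite Rmult_0_r.
by case: Hnone; exists j.
Qed.

End StochasticPowers.

(** * Recurrence and superharmonic functions *)

Definition superharmonic {Om : countType} (P : Om -> Om -> R) (u : Om -> R) (x0 : Om) (delta : R) :=
  forall y, sumR (fun x => P y x * u x) <= u y - (if y == x0 then delta else 0).

Section Recurrence.
Context {Om : countType}.
Variable P : Om -> Om -> R.
Hypothesis HP : stochastic P.

Lemma recurrent_geometric_false (c : R) y : recurrent P -> 0 <= c < 1 ->
  (forall n, mpow P (S n) y y <= c ^ (S n)) -> False.
Proof.
move=> Hrec Hc Hbound; apply: (lim_p_infty_unbounded _ (/ (1 - c)) (Hrec y)) => N.
exact: Rle_trans (sum_n_le _ _ N Hbound) (sum_n_geom_le c N Hc).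
Qed.

Section Superharmonic.
Variables (u : Om -> R) (U : R) (x0 : Om) (delta : R).
Hypothesis Hu : forall x, 0 <= u x <= U.
Hypothesis Hdelta : 0 <= delta.
Hypothesis Hsuper : superharmonic P u x0 delta.

Lemma superharmonic_mpow_step j n :
  sumR (fun x => mpow P (S n) j x * u x) <=
  sumR (fun x => mpow P n j x * u x) - delta * mpow P n j x0.
Proof.
have HU : 0 <= U by have := Hu j; lra.
have Hdefect : forall y, 0 <= u y - (if y == x0 then delta else 0) <= U.
{ move=> y; split; last by have := Hu y; case: (y == x0); lra.
  apply: Rle_trans (Hsuper y); apply: sumR_ge0; last exact: stochastic_summable_mul P HP y u U Hu.
  by move=> x; apply: Rmult_le_pos; [apply: stochastic_ge0 | case: (Hu x)]. }
have [_ Hswap] := sumR_swap_le (mpow P n j) P u U (mpow_ge0 P HP n j) (mpow_summable P HP n j)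
  (stochastic_ge0 P HP) (stochastic_summable P HP) (fun y => Req_le _ _ (stochastic_sum P HP y))
  HU Hu.
apply: Rle_trans Hswap _.
apply: Rle_trans (sumR_le (fun y => mpow P n j y * sumR (fun x => P y x * u x))
  (fun y => mpow P n j y * (u y - (if y == x0 then delta else 0))) _ _) _.
- move=> y; split; last exact: Rmult_le_compat_l (mpow_ge0 P HP n j y) (Hsuper y).
  apply: Rmult_le_pos; first exact: mpow_ge0.
  apply: sumR_ge0; last exact: stochastic_summable_mul P HP y u U Hu.
  by move=> x; apply: Rmult_le_pos; [apply: stochastic_ge0 | case: (Hu x)].
- exact: mpow_summable_mul P HP n j _ U Hdefect.
- have Hsingle : forall y, y <> x0 -> mpow P n j y * (if y == x0 then delta else 0) = 0.
  { by move=> y Hy; case: eqP => // _; rewrite Rmult_0_r. }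
  rewrite (sumR_ext _ (fun y => mpow P n j y * u y - mpow P n j y * (if y == x0 then delta else 0)))
    => [|y]; last ring.
  rewrite sumR_minus ?(sumR_single _ _ Hsingle) ?eqxx.
  + rewrite Rmult_comm; apply: Rle_refl.
  + exact: mpow_summable_mul P HP n j _ U Hu.
  + exact: summable_single Hsingle.
Qed.

(* Telescope [superharmonic_mpow_step]. *)
Lemma superharmonic_green_le j N : delta * sum_n (fun n => mpow P n j x0) N <= u j.
Proof.
pose m n := sumR (fun x => mpow P n j x * u x).
have Hm_ge0 : forall n, 0 <= m n.
{ move=> n; apply: sumR_ge0; last exact: mpow_summable_mul P HP n j u U Hu.
  by move=> x; apply: Rmult_le_pos; [apply: mpow_ge0 | case: (Hu x)]. }
have Hm0 : m O = u j.
{ rewrite /m (sumR_single _ j) ?mpow0 ?eqxx ?Rmult_1_l // => x Hx.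
  by rewrite mpow0_single // Rmult_0_l. }
have Hstep : forall n, m (S n) <= m n - delta * mpow P n j x0 := superharmonic_mpow_step j.
clearbody m.
suff Htel : forall N, m (S N) + delta * sum_n (fun n => mpow P n j x0) N <= u j.
{ have := Htel N; have := Hm_ge0 (S N); lra. }
elim=> [|n IH]; first by rewrite sum_O; have := Hstep O; lra.
rewrite sum_Sn; change (plus ?a ?b) with (a + b); rewrite Rmult_plus_distr_l.
have := Hstep (S n); lra.
Qed.

End Superharmonic.

(* The Green function bound at [x0] bounds the return series at [y], up to the factor
   [P^q(y, x0)]. *)
Lemma recurrent_superharmonic_false u U x0 delta y q : recurrent P ->
  (forall x, 0 <= u x <= U) -> 0 < delta -> superharmonic P u x0 delta ->
  0 < mpow P q y x0 -> False.
Proof.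
move=> Hrec Hu Hdelta Hsuper Hq.
have Hpos : 0 < delta * mpow P q y x0 by apply: Rmult_lt_0_compat.
apply: (lim_p_infty_unbounded _ (U / (delta * mpow P q y x0)) (Hrec y)) => N.
apply: (Rmult_le_reg_l _ _ _ Hpos).
have -> : delta * mpow P q y x0 * (U / (delta * mpow P q y x0)) = U by field; lra.
have Hgreen := superharmonic_green_le _ _ _ _ Hu (Rlt_le _ _ Hdelta) Hsuper y (N + S q).
have Hshift := sum_n_shift_le _ (S q) (fun m => mpow_ge0 P HP m y x0) N.
have Hcompose : mpow P q y x0 * sum_n (fun n => mpow P (S n) y y) N <=
                sum_n (fun n => mpow P (n + S q) y x0) N.
{ have Hdistr := sum_n_mult_l (mpow P q y x0) (fun n => mpow P (S n) y y) N.
  change (mult ?a ?b) with (a * b) in Hdistr; rewrite -Hdistr; apply: sum_n_le => n.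
  rewrite Rmult_comm; have -> : (n + S q = S n + q)%nat by lia.
  exact: mpow_mul_le. }
have := Hu y; have := Hdelta; nra.
Qed.

Lemma exit_edge (T : Om -> Prop) y k n : T y -> ~ T k -> 0 < mpow P n y k ->
  exists x z q, 0 < mpow P q y x /\ T x /\ ~ T z /\ 0 < P x z.
Proof.
move=> Ty; elim: n k => [|n IH] k Tk Hyk.
- by move: Hyk; rewrite mpow0; case: eqP => [E|_]; [subst; case: Tk | lra].
- have [l [Hyl Hlk]] := mpowS_pos P HP n y k Hyk.
  case: (classic (T l)) => [Tl|Tl]; first by exists l, k, n.
  exact: IH l Tl Hyl.
Qed.

Section Indicator.
Variables (T : Om -> Prop) (x z : Om).
Hypothesis Hclosed : forall w v, ~ T w -> 0 < P w v -> ~ T v.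
Hypothesis Tx : T x.
Hypothesis Tz : ~ T z.

Definition indicator w := if excluded_middle_informative (T w) then 1 else 0.

Lemma indicator_in w : T w -> indicator w = 1.
Proof. by move=> Tw; rewrite /indicator; case: excluded_middle_informative. Qed.

Lemma indicator_out w : ~ T w -> indicator w = 0.
Proof. by move=> Tw; rewrite /indicator; case: excluded_middle_informative. Qed.

Lemma indicator_bounds w : 0 <= indicator w <= 1.
Proof. by case: (classic (T w)) => Tw; [rewrite indicator_in | rewrite indicator_out] => //; lra. Qed.

(* The edge [x -> z] leaves [T], so the mass [P x z] is lost at [x]. *)
Lemma indicator_superharmonic : superharmonic P indicator x (P x z).
Proof.
move=> w; case: (classic (T w)) => Tw.
- pose g v := if w == x then (if v == z then P x z else 0) else 0.
  have Hg : forall v, v <> z -> g v = 0.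
  { by move=> v Hv; rewrite /g; case: (w == x) => //; case: eqP. }
  rewrite indicator_in //; apply: Rle_trans (sumR_le _ (fun v => P w v - g v) _ _) _.
  + move=> v; have := indicator_bounds v; have := stochastic_ge0 P HP w v; split; first nra.
    rewrite /g; case: eqP => [Ew|_]; last nra.
    case: eqP => [Ev|_]; last nra.
    by rewrite Ew Ev indicator_out //; lra.
  + exact: summable_minus (stochastic_summable P HP w) (summable_single _ _ Hg).
  + rewrite sumR_minus ?(stochastic_sum P HP) ?(sumR_single _ _ Hg).
    * by rewrite /g eqxx; case: (w == x); lra.
    * exact: stochastic_summable.
    * exact: summable_single Hg.
- have -> : (w == x) = false by apply/eqP => Ew; apply: Tw; rewrite Ew.
  rewrite indicator_out // sumR_zero; first lra.
  move=> v; case: (Rle_lt_or_eq_dec _ _ (stochastic_ge0 P HP w v)) => [Hwv|<-]; last ring.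
  by rewrite indicator_out ?Rmult_0_r //; apply: Hclosed Hwv.
Qed.

End Indicator.

Lemma recurrent_reach_back y k n : recurrent P -> 0 < mpow P n y k -> exists p, 0 < mpow P p k y.
Proof.
move=> Hrec Hyk; apply: NNPP => Hnot.
pose T x := exists p, 0 < mpow P p x y.
have Ty : T y by exists O; rewrite mpow0 eqxx; lra.
have Hclosed : forall w v, ~ T w -> 0 < P w v -> ~ T v.
{ move=> w v Tw Hwv [p Hp]; apply: Tw; exists (1 + p)%nat.
  by apply: (mpow_add_pos P HP _ _ _ v); rewrite ?mpow1. }
have [x [z [q [Hq [Tx [Tz Hxz]]]]]] := exit_edge T y k n Ty Hnot Hyk.
apply: (recurrent_superharmonic_false (indicator T) 1 x (P x z) y q Hrec _ Hxz _ Hq).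
- exact: indicator_bounds.
- exact: indicator_superharmonic.
Qed.

End Recurrence.

(** * Matrix units under a unitary isomorphism *)

Section MatrixUnits.
Context {Om : countType}.

Definition mx_unit (i j : Om) : Om -> Om -> C :=
  fun a b => if (a == i) && (b == j) then 1%C else 0%C.

Definition mx_zero : Om -> Om -> C := fun _ _ => 0%C.

Lemma mx_unit_11 i j : mx_unit i j i j = 1%C.
Proof. by rewrite /mx_unit !eqxx. Qed.

Lemma mx_unit_row0 i j a b : a <> i -> mx_unit i j a b = 0%C.
Proof. by move=> Ha; rewrite /mx_unit; case: eqP. Qed.

Lemma mx_unit_col0 i j a b : b <> j -> mx_unit i j a b = 0%C.
Proof. by move=> Hb; rewrite /mx_unit andbC; case: eqP. Qed.

Lemma proj_self (j : Om) : proj j j = 1%C.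
Proof. by rewrite /proj eqxx. Qed.

Lemma proj_other (j x : Om) : x <> j -> proj j x = 0%C.
Proof. by move=> Hx; rewrite /proj; case: eqP. Qed.

Lemma linfty_proj (j : Om) : linfty (proj j).
Proof.
exists 1 => x; rewrite /proj; case: (x == j); [rewrite Cmod_1 | rewrite Cmod_0]; lra.
Qed.

Lemma mx_unit_sandwich i j : mx_unit i j = (fun a b => proj i a * mx_unit i j a b * proj j b)%C.
Proof.
apply: functional_extensionality => a; apply: functional_extensionality => b.
by rewrite /mx_unit /proj; case: eqP => _; case: eqP => _ /=; ring.
Qed.

Lemma Arv_mx_unit P n i j : mpow P n i j <> 0 -> Arv P n (mx_unit i j).
Proof.
move=> Hij; split.
- move=> a b Hab; rewrite /mx_unit; case: eqP => [Ea|] //; case: eqP => [Eb|] //=.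
  by case: Hij; rewrite -Ea -Eb.
- exists 1 => b N.
  have Hcol : forall a, a <> i -> Cmod (mx_unit i j a b) ^ 2 = 0.
  { by move=> a Ha; rewrite mx_unit_row0 // Cmod_0; ring. }
  apply: Rle_trans (sum_n_le_Series _ (enc_ge0 _ (fun a => pow2_ge_0 _)) (summable_single _ _ Hcol) N) _.
  rewrite -/(sumR _) (sumR_single _ _ Hcol) /mx_unit eqxx /=.
  case: (b == j); [rewrite Cmod_1 | rewrite Cmod_0]; lra.
Qed.

Lemma Arv_mx_zero P n : Arv P n mx_zero.
Proof.
split=> //; exists 0 => b N.
have Hcol : forall a, Cmod (mx_zero a b) ^ 2 = 0 by move=> a; rewrite /mx_zero Cmod_0; ring.
apply: Rle_trans (sum_n_le_Series _ (enc_ge0 _ (fun a => pow2_ge_0 _))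
  (summable_single _ b (fun a _ => Hcol a)) N) _.
by rewrite -/(sumR _) sumR_zero //; apply: Rle_refl.
Qed.

Lemma inner_mx_unit i j : inner (mx_unit i j) (mx_unit i j) = proj j.
Proof.
apply: functional_extensionality => b; rewrite /inner.
case: (eqVneq b j) => [->|Hb].
- rewrite (sumC_single _ i) ?mx_unit_11 ?proj_self; first by apply: injective_projections => /=; ring.
  by move=> a Ha; rewrite mx_unit_row0 //; apply: injective_projections => /=; ring.
- rewrite proj_other; last exact/eqP.
  rewrite sumC_zero // => a; rewrite mx_unit_col0; last exact/eqP.
  by apply: injective_projections => /=; ring.
Qed.

Lemma Cmod_eq1_of_conj (c : C) : (Cconj c * c = 1)%C -> Cmod c = 1.
Proof.
move=> Hc; have Hmod := Cmod2_conj c; rewrite Cmult_comm Hc in Hmod.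
have := RtoC_inj _ _ Hmod; have := Cmod_ge_0 c; nra.
Qed.

Lemma proj_sigma_injective (rho : (Om -> C) -> (Om -> C)) (sigma : Om -> Om) :
  star_automorphism rho -> (forall j x, rho (proj j) x = proj (sigma j) x) -> injective sigma.
Proof.
move=> [_ [_ [_ [_ [_ [Hinj _]]]]]] Hsig a b Hab.
have Hrho : forall x, rho (proj a) x = rho (proj b) x by move=> x; rewrite !Hsig Hab.
have := Hinj (proj a) (proj b) (linfty_proj a) (linfty_proj b) Hrho a.
by rewrite proj_self /proj; case: eqP => // _ H10; case: C1_nz.
Qed.

Lemma Umap_mx_unit P n m (i j k : Om) :
  Umap P n m (mx_unit i j) (mx_unit j k) =
  (fun a b => mx_zero a b + RtoC (flat (sqrt (mpow P (n + m) i k)) *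
     (sqrt (mpow P n i j) * sqrt (mpow P m j k))) * mx_unit i k a b)%C.
Proof.
apply: functional_extensionality => a; apply: functional_extensionality => b.
rewrite /Umap /mx_zero; case: (eqVneq a i) => [->|Ha]; last first.
  rewrite sumC_zero => [|l]; first by rewrite mx_unit_row0; [ring | exact/eqP].
  by rewrite mx_unit_row0; [ring | exact/eqP].
case: (eqVneq b k) => [->|Hb]; last first.
  rewrite sumC_zero => [|l]; first by rewrite mx_unit_col0; [ring | exact/eqP].
  by rewrite (mx_unit_col0 j k l b); [ring | exact/eqP].
rewrite (sumC_single _ j) => [|l Hl]; last by rewrite (mx_unit_col0 i j i l Hl); ring.
by rewrite !mx_unit_11 !RtoC_mult; ring.
Qed.

End MatrixUnits.

Lemma flat_sqrt x : 0 < x -> flat (sqrt x) = / sqrt x.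
Proof. by move=> Hx; rewrite /flat; case: Rlt_dec => // H; case: H; apply: sqrt_lt_R0. Qed.

Lemma sqrt_ratio_sq u v w : 0 <= u -> 0 <= v -> 0 < w ->
  (/ sqrt w * (sqrt u * sqrt v)) ^ 2 = u * v / w.
Proof.
move=> Hu Hv Hw; rewrite !Rpow_mult_distr pow_inv !pow2_sqrt; lra.
Qed.

Lemma pow_inj_pos (x y : R) n : 0 < x -> 0 < y -> (1 <= n)%nat -> x ^ n = y ^ n -> x = y.
Proof.
move=> Hx Hy Hn Hxy; apply: ln_inv => //.
have Hn0 : 0 < INR n by apply: lt_0_INR; lia.
apply: (Rmult_eq_reg_l (INR n)); last lra.
by rewrite -!ln_pow // Hxy.
Qed.

Section UnitaryIsomorphism.
Context {Om : countType}.
Variables (P Q : Om -> Om -> R) (rho : (Om -> C) -> (Om -> C)) (sigma : Om -> Om)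
  (V : nat -> (Om -> Om -> C) -> (Om -> Om -> C)).
Hypothesis HP : stochastic P.
Hypothesis HQ : stochastic Q.
Hypothesis Hsigma : forall j x, rho (proj j) x = proj (sigma j) x.
Hypothesis HV : rho_unitary_iso P Q rho V.

Lemma V_zero n a b : (1 <= n)%nat -> V n mx_zero a b = 0%C.
Proof.
move=> Hn; have [_ [_ [Hlin _]]] := HV.
have := Hlin n Hn 1%C _ _ (Arv_mx_zero P n) (Arv_mx_zero P n) a b.
have -> : (fun i j : Om => mx_zero i j + 1 * mx_zero i j)%C = mx_zero.
{ by apply: functional_extensionality => x; apply: functional_extensionality => y;
    rewrite /mx_zero; ring. }
move=> Hdouble.
have -> : V n mx_zero a b = ((V n mx_zero a b + 1 * V n mx_zero a b) - V n mx_zero a b)%C by ring.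
by rewrite -Hdouble; ring.
Qed.

Lemma V_proj_sandwich n A (i j a b : Om) : (1 <= n)%nat -> Arv P n A ->
  V n (fun x y => proj i x * A x y * proj j y)%C a b =
  (proj (sigma i) a * V n A a b * proj (sigma j) b)%C.
Proof.
move=> Hn HA; have [_ [_ [_ [Hmod _]]]] := HV.
by rewrite Hmod ?Hsigma //; apply: linfty_proj.
Qed.

Lemma V_mx_unit_support n (i j a b : Om) : (1 <= n)%nat -> mpow P n i j <> 0 ->
  (a <> sigma i \/ b <> sigma j) -> V n (mx_unit i j) a b = 0%C.
Proof.
move=> Hn Hij Hab; rewrite mx_unit_sandwich V_proj_sandwich -?mx_unit_sandwich //;
  last exact: Arv_mx_unit.
by case: Hab => [Ha|Hb]; [rewrite (proj_other _ _ Ha) | rewrite (proj_other _ _ Hb)]; ring.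
Qed.

Lemma Cmod_V_mx_unit n (i j : Om) : (1 <= n)%nat -> mpow P n i j <> 0 ->
  Cmod (V n (mx_unit i j) (sigma i) (sigma j)) = 1.
Proof.
move=> Hn Hij; have [_ [_ [_ [_ [Hinner _]]]]] := HV.
have HA := Arv_mx_unit P n i j Hij.
have := Hinner n Hn _ _ HA HA (sigma j).
rewrite inner_mx_unit Hsigma proj_self /inner (sumC_single _ (sigma i)) => [|x Hx].
- exact: Cmod_eq1_of_conj.
- by rewrite (V_mx_unit_support n i j x (sigma j)) //; [ring | left].
Qed.

Lemma mpow_neq0_sigma n (i j : Om) : (1 <= n)%nat -> mpow P n i j <> 0 ->
  mpow Q n (sigma i) (sigma j) <> 0.
Proof.
move=> Hn Hij HQ0; have [HArv _] := HV.
have := Cmod_V_mx_unit n i j Hn Hij.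
rewrite (proj1 (HArv n Hn _ (Arv_mx_unit P n i j Hij)) _ _ HQ0) Cmod_0; lra.
Qed.

Lemma mpow_neq0_sigma_inv n (i j : Om) : (1 <= n)%nat -> mpow Q n (sigma i) (sigma j) <> 0 ->
  mpow P n i j <> 0.
Proof.
move=> Hn HQij HP0; have [_ [Hsurj _]] := HV.
have [A [HA HVA]] := Hsurj n Hn _ (Arv_mx_unit Q n _ _ HQij).
have := V_proj_sandwich n A i j (sigma i) (sigma j) Hn HA.
have -> : (fun x y => proj i x * A x y * proj j y)%C = mx_zero.
{ apply: functional_extensionality => x; apply: functional_extensionality => y.
  rewrite /mx_zero /proj; case: eqP => [->|_]; case: eqP => [->|_] /=; try ring.
  by rewrite (proj1 HA _ _ HP0); ring. }
rewrite V_zero // HVA !proj_self mx_unit_11 => H10.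
by apply: C1_nz; rewrite H10; ring.
Qed.

Lemma mpow_pos_sigma n (i j : Om) : (1 <= n)%nat ->
  0 < mpow P n i j <-> 0 < mpow Q n (sigma i) (sigma j).
Proof.
move=> Hn; have := mpow_ge0 P HP n i j; have := mpow_ge0 Q HQ n (sigma i) (sigma j).
have := @mpow_neq0_sigma n i j Hn; have := @mpow_neq0_sigma_inv n i j Hn.
move=> H1 H2 HQ0 HP0; split=> Hpos.
- have := H2 (Rgt_not_eq _ _ Hpos); lra.
- have := H1 (Rgt_not_eq _ _ Hpos); lra.
Qed.

(* Both sides are the square of the coefficient by which [U_{n,m}] sends
   [E_ij (x) E_jk] to [E_ik]; the covariance of [V] and [|V E_ij| = 1] identify them. *)
Lemma mpow_split_ratio n m (i j k : Om) : (1 <= n)%nat -> (1 <= m)%nat ->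
  0 < mpow P n i j -> 0 < mpow P m j k ->
  mpow P n i j * mpow P m j k / mpow P (n + m) i k =
  mpow Q n (sigma i) (sigma j) * mpow Q m (sigma j) (sigma k) / mpow Q (n + m) (sigma i) (sigma k).
Proof.
move=> Hn Hm Hij Hjk.
have Hik := mpow_add_pos P HP n m i j k Hij Hjk.
have Hnm : (1 <= n + m)%nat by lia.
have Hij' := proj1 (mpow_pos_sigma n i j Hn) Hij.
have Hjk' := proj1 (mpow_pos_sigma m j k Hm) Hjk.
have Hik' := proj1 (mpow_pos_sigma (n + m) i k Hnm) Hik.
have [_ [_ [Hlin [_ [_ Hcov]]]]] := HV.
have HAij := Arv_mx_unit P n i j (Rgt_not_eq _ _ Hij).
have HAjk := Arv_mx_unit P m j k (Rgt_not_eq _ _ Hjk).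
have HAik := Arv_mx_unit P (n + m) i k (Rgt_not_eq _ _ Hik).
have := Hcov n m Hn Hm _ _ HAij HAjk (sigma i) (sigma k).
rewrite Umap_mx_unit Hlin ?V_zero ?Cplus_0_l //; last exact: Arv_mx_zero.
rewrite /Umap (sumC_single _ (sigma j)) => [|l Hl]; last first.
  by rewrite (V_mx_unit_support n i j (sigma i) l Hn (Rgt_not_eq _ _ Hij) (or_intror Hl)); ring.
move/(f_equal Cmod); rewrite !Cmod_mult !Cmod_R.
rewrite !Cmod_V_mx_unit ?Rmult_1_r //; try lra.
rewrite !flat_sqrt // !Rabs_pos_eq; try by apply: Rlt_le; apply: Rinv_0_lt_compat; apply: sqrt_lt_R0.
- move=> Heq; rewrite -(sqrt_ratio_sq _ _ _ (Rlt_le _ _ Hij) (Rlt_le _ _ Hjk) Hik) Heq.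
  by rewrite sqrt_ratio_sq //; lra.
- exact: sqrt_pos.
- exact: sqrt_pos.
- by apply: Rmult_le_pos; [apply: Rlt_le; apply: Rinv_0_lt_compat; apply: sqrt_lt_R0 | apply: Rmult_le_pos; apply: sqrt_pos].
Qed.

End UnitaryIsomorphism.

(** * The ratio cocycle *)

Section RatioCocycle.
Context {Om : countType}.
Variables (P Q : Om -> Om -> R) (rho : (Om -> C) -> (Om -> C)) (sigma : Om -> Om)
  (V : nat -> (Om -> Om -> C) -> (Om -> Om -> C)).
Hypothesis HP : stochastic P.
Hypothesis HQ : stochastic Q.
Hypothesis Hrho : star_automorphism rho.
Hypothesis Hsigma : forall j x, rho (proj j) x = proj (sigma j) x.
Hypothesis HV : rho_unitary_iso P Q rho V.
Hypothesis RP : recurrent P.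
Hypothesis RQ : recurrent Q.

Definition ratio n (a b : Om) := mpow P n a b / mpow Q n (sigma a) (sigma b).

Lemma mpow_pos_Q n (a b : Om) : (1 <= n)%nat -> 0 < mpow P n a b -> 0 < mpow Q n (sigma a) (sigma b).
Proof. by move=> Hn; apply: (proj1 (mpow_pos_sigma P Q rho sigma V HP HQ Hsigma HV n a b Hn)). Qed.

Lemma mpow_pos_P n (a b : Om) : (1 <= n)%nat -> 0 < mpow Q n (sigma a) (sigma b) -> 0 < mpow P n a b.
Proof. by move=> Hn; apply: (proj2 (mpow_pos_sigma P Q rho sigma V HP HQ Hsigma HV n a b Hn)). Qed.

Lemma ratio_pos n a b : (1 <= n)%nat -> 0 < mpow P n a b -> 0 < ratio n a b.
Proof. by move=> Hn Hab; apply: Rdiv_lt_0_compat => //; apply: mpow_pos_Q. Qed.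

Lemma ratio_add m n i j k : (1 <= m)%nat -> (1 <= n)%nat ->
  0 < mpow P m i j -> 0 < mpow P n j k -> ratio (m + n) i k = ratio m i j * ratio n j k.
Proof.
move=> Hm Hn Hij Hjk.
have Hik := mpow_add_pos P HP m n i j k Hij Hjk.
have Hsplit := mpow_split_ratio P Q rho sigma V HP HQ Hsigma HV m n i j k Hm Hn Hij Hjk.
have Hij' := mpow_pos_Q m i j Hm Hij.
have Hjk' := mpow_pos_Q n j k Hn Hjk.
have Hik' := mpow_pos_Q (m + n) i k ltac:(lia) Hik.
rewrite /ratio; field_simplify_eq in Hsplit; try lra.
field_simplify_eq; [nra | lra].
Qed.

Lemma ratio_loop_pow m y k : (1 <= m)%nat -> 0 < mpow P m y y -> (1 <= k)%nat ->
  0 < mpow P (k * m) y y /\ ratio (k * m) y y = ratio m y y ^ k.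
Proof.
move=> Hm Hy Hk; induction Hk as [|k Hk [IH1 IH2]].
- by rewrite Nat.mul_1_l; split => //; ring.
- have -> : (S k * m = k * m + m)%nat by lia.
  split; first exact: mpow_add_pos P HP _ _ _ y _ IH1 Hy.
  by rewrite (ratio_add _ _ _ y) ?IH2 //=; [ring | nia].
Qed.

Lemma ratio_loop_geometric N y : (1 <= N)%nat -> 0 < mpow P N y y ->
  exists c, 0 < c /\ forall n, (1 <= n)%nat -> 0 < mpow P n y y -> ratio n y y = c ^ n.
Proof.
move=> HN HyN.
have Hb := ratio_pos N y y HN HyN.
have HN0 : 0 < INR N by apply: lt_0_INR; lia.
exists (Rpower (ratio N y y) (/ INR N)); split; first by rewrite /Rpower; apply: exp_pos.
move=> n Hn Hyn; apply: (pow_inj_pos _ _ N) => //.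
- exact: ratio_pos.
- by apply: pow_lt; rewrite /Rpower; apply: exp_pos.
- rewrite -pow_mult Nat.mul_comm pow_mult -(Rpower_pow N (Rpower _ _)); last by rewrite /Rpower; apply: exp_pos.
  rewrite Rpower_mult Rinv_l ?Rpower_1 //; last lra.
  have [_ E1] := ratio_loop_pow n y N Hn Hyn HN.
  have [_ E2] := ratio_loop_pow N y n HN HyN Hn.
  by rewrite -E1 -E2 Nat.mul_comm.
Qed.

(* A geometric rate [c < 1] would make [P] transient, a rate [c > 1] would make [Q] so. *)
Lemma ratio_loop N y : (1 <= N)%nat -> 0 < mpow P N y y -> ratio N y y = 1.
Proof.
move=> HN HyN; have [c [Hc Hgeom]] := ratio_loop_geometric N y HN HyN.
suff Hc1 : c = 1 by rewrite (Hgeom N HN HyN) Hc1 pow1.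
case: (Rtotal_order c 1) => [Hlt|[//|Hgt]]; exfalso.
- apply: (recurrent_geometric_false P c y RP) => [|n]; first lra.
  case: (Rle_lt_or_eq_dec _ _ (mpow_ge0 P HP (S n) y y)) => [Hpos|<-]; last by apply: pow_le; lra.
  have HQpos := mpow_pos_Q (S n) y y ltac:(lia) Hpos.
  have HQ1 := mpow_le1 Q HQ (S n) (sigma y) (sigma y).
  rewrite -(Hgeom (S n) ltac:(lia) Hpos) /ratio -{1}(Rdiv_1_r (mpow P (S n) y y)).
  by apply: Rmult_le_compat_l; [lra | apply: Rinv_le_contravar].
- have Hinv : 0 <= / c < 1.
  { split; first by apply: Rlt_le; apply: Rinv_0_lt_compat.
    by rewrite -Rinv_1; apply: Rinv_lt_contravar; lra. }
  apply: (recurrent_geometric_false Q (/ c) (sigma y) RQ Hinv) => n.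
  case: (Rle_lt_or_eq_dec _ _ (mpow_ge0 Q HQ (S n) (sigma y) (sigma y))) => [Hpos|<-];
    last by apply: pow_le; lra.
  have HPpos := mpow_pos_P (S n) y y ltac:(lia) Hpos.
  have HP1 := mpow_le1 P HP (S n) y y.
  have Hcn : 0 < c ^ S n by apply: pow_lt.
  have := Hgeom (S n) ltac:(lia) HPpos; rewrite /ratio pow_inv => Hr.
  have -> : mpow Q (S n) (sigma y) (sigma y) = mpow P (S n) y y * / c ^ S n.
  { by rewrite -Hr; field; lra. }
  rewrite -{2}(Rmult_1_l (/ c ^ S n)); apply: Rmult_le_compat_r => //.
  by apply: Rlt_le; apply: Rinv_0_lt_compat.
Qed.

Lemma ratio_indep n m y x : (1 <= n)%nat -> (1 <= m)%nat ->
  0 < mpow P n y x -> 0 < mpow P m y x -> ratio n y x = ratio m y x.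
Proof.
move=> Hn Hm Hyx_n Hyx_m.
have [[|p] Hp] := recurrent_reach_back P HP y x n RP Hyx_n.
- move: Hp; rewrite mpow0; case: eqP => [Exy _|_]; last lra.
  by subst; rewrite !ratio_loop.
- have Hret : forall k, (1 <= k)%nat -> 0 < mpow P k y x -> ratio k y x * ratio (S p) x y = 1.
  { move=> k Hk Hyx; rewrite -(ratio_add _ _ _ x) //; try lia.
    by apply: ratio_loop; [lia | apply: (mpow_add_pos P HP _ _ _ x)]. }
  have := ratio_pos (S p) x y ltac:(lia) Hp.
  have := Hret n Hn Hyx_n; have := Hret m Hm Hyx_m; nra.
Qed.

Definition reaches (y x : Om) := exists n, (1 <= n)%nat /\ 0 < mpow P n y x.

Lemma reaches_self y : reaches y y.
Proof.
apply: NNPP => Hnot; apply: (lim_p_infty_unbounded _ 0 (RP y)) => N.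
have Hzero : forall n, mpow P (S n) y y = 0.
{ move=> n; case: (Rle_lt_or_eq_dec _ _ (mpow_ge0 P HP (S n) y y)) => // Hpos.
  by case: Hnot; exists (S n); split => //; lia. }
rewrite (sum_n_ext _ (fun _ => 0)) //.
elim: N => [|N IH]; rewrite ?sum_O ?sum_Sn /plus /=; lra.
Qed.

Lemma reaches_step y w v : reaches y w -> 0 < P w v -> reaches y v.
Proof.
move=> [n [Hn Hyw]] Hwv; exists (n + 1)%nat; split; first lia.
by apply: (mpow_add_pos P HP _ _ _ w) => //; rewrite mpow1.
Qed.

(* By [ratio_indep] this is [ratio n y x] for every [n >= 1] with [P^n(y, x) > 0];
   the value [1] off the states reached from [y] is arbitrary. *)
Definition path_ratio (y x : Om) : R :=
  match excluded_middle_informative (reaches y x) with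
  | left H => ratio (proj1_sig (constructive_indefinite_description _ H)) y x
  | right _ => 1
  end.

Lemma path_ratioE y x n : (1 <= n)%nat -> 0 < mpow P n y x -> path_ratio y x = ratio n y x.
Proof.
move=> Hn Hyx; rewrite /path_ratio; case: excluded_middle_informative => [H|H].
- by case: constructive_indefinite_description => m [Hm Hyx_m] /=; apply: ratio_indep.
- by case: H; exists n.
Qed.

Lemma path_ratio_pos y x : 0 < path_ratio y x.
Proof.
rewrite /path_ratio; case: excluded_middle_informative => [H|_]; last lra.
by case: constructive_indefinite_description => m [Hm Hyx] /=; apply: ratio_pos.
Qed.

Lemma path_ratio_self y : path_ratio y y = 1.
Proof. by have [N [HN HyN]] := reaches_self y; rewrite (path_ratioE _ _ N) // ratio_loop. Qed.

Lemma path_ratio_step y w v : reaches y w -> 0 < P w v ->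
  path_ratio y v = path_ratio y w * ratio 1 w v.
Proof.
move=> [n [Hn Hyw]] Hwv; have Hwv1 : 0 < mpow P 1 w v by rewrite mpow1.
rewrite (path_ratioE y w n) // -(ratio_add _ _ _ w) //.
by apply: path_ratioE; [lia | apply: (mpow_add_pos P HP _ _ _ w)].
Qed.

Lemma ratio1_pos w v : 0 < P w v -> 0 < ratio 1 w v.
Proof. by move=> Hwv; apply: ratio_pos => //; rewrite mpow1. Qed.

Lemma P_div_ratio1 w v : 0 < P w v -> P w v / ratio 1 w v = Q (sigma w) (sigma v).
Proof.
move=> Hwv; have := mpow_pos_Q 1 w v (le_n 1); rewrite !mpow1 => HQwv.
by rewrite /ratio !mpow1; field; have := HQwv Hwv; lra.
Qed.

Lemma Q_row_sigma w :
  summable (fun v => Q (sigma w) (sigma v)) /\ sumR (fun v => Q (sigma w) (sigma v)) <= 1.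
Proof.
have [Hs Hle] := sumR_comp_inj_le (Q (sigma w)) sigma (proj_sigma_injective _ _ Hrho Hsigma)
  (stochastic_ge0 Q HQ _) (stochastic_summable Q HQ _).
by split => //; rewrite -(stochastic_sum Q HQ (sigma w)).
Qed.

Section EdgeTest.
Variables y k : Om.
Hypothesis Hyk : 0 < P y k.
Hypothesis Hgt1 : 1 < ratio 1 y k.

(* Along an edge [w -> v] one has [Q = P * h w / h v] with [h = path_ratio y], so
   [min (1 / h, 1)] is superharmonic, strictly at [y] since [h y k > 1 = h y y]. *)
Definition edge_test x : R :=
  if excluded_middle_informative (reaches y x) then Rmin (/ path_ratio y x) 1 else 1.

Definition edge_defect := P y k * (1 - / path_ratio y k).

Lemma edge_test_bounds x : 0 <= edge_test x <= 1.
Proof.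
rewrite /edge_test; case: (excluded_middle_informative (reaches y x)) => Hreach /=; last lra.
split; last exact: Rmin_r.
by apply: Rmin_glb; [apply: Rlt_le; apply: Rinv_0_lt_compat; apply: path_ratio_pos | lra].
Qed.

Lemma edge_test_le_inv x : reaches y x -> edge_test x <= / path_ratio y x.
Proof. by rewrite /edge_test; case: excluded_middle_informative => //= _ _; apply: Rmin_l. Qed.

Lemma edge_test_self : edge_test y = 1.
Proof.
rewrite /edge_test; case: excluded_middle_informative => //= _.
by rewrite path_ratio_self Rinv_1; apply: Rmin_left; lra.
Qed.

Lemma path_ratio_edge : path_ratio y k = ratio 1 y k.
Proof. by apply: path_ratioE => //; rewrite mpow1. Qed.

Lemma edge_defect_pos : 0 < edge_defect.
Proof.
apply: Rmult_lt_0_compat => //; rewrite path_ratio_edge.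
have : / ratio 1 y k < 1 by rewrite -Rinv_1; apply: Rinv_lt_contravar; lra.
lra.
Qed.

Lemma edge_test_sum_le1 w : sumR (fun v => P w v * edge_test v) <= 1.
Proof.
rewrite -(stochastic_sum P HP w); apply: sumR_le => [v|]; last exact: stochastic_summable.
have := edge_test_bounds v; have := stochastic_ge0 P HP w v; split; nra.
Qed.

Lemma edge_test_sum_reached w : reaches y w ->
  sumR (fun v => P w v * edge_test v) <= / path_ratio y w.
Proof.
move=> Hw; have Hh := Rinv_0_lt_compat _ (path_ratio_pos y w).
have [HQs HQ1] := Q_row_sigma w.
apply: Rle_trans (sumR_le _ (fun v => / path_ratio y w * Q (sigma w) (sigma v)) _ (summable_scal _ _ HQs)) _.
- move=> v; have := edge_test_bounds v; have := stochastic_ge0 P HP w v => HPwv Hu.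
  split; first nra.
  case: (Rle_lt_or_eq_dec _ _ HPwv) => [Hwv|<-]; last first.
    by have := stochastic_ge0 Q HQ (sigma w) (sigma v); nra.
  have Hv := edge_test_le_inv v (reaches_step y w v Hw Hwv).
  rewrite (path_ratio_step y w v Hw Hwv) in Hv.
  rewrite -(P_div_ratio1 w v Hwv); have := ratio1_pos w v Hwv => Hr.
  apply: Rle_trans (Rmult_le_compat_l _ _ _ (Rlt_le _ _ Hwv) Hv) _.
  by apply: Req_le; field; have := path_ratio_pos y w; split; lra.
- rewrite sumR_scal -{2}(Rmult_1_r (/ path_ratio y w)).
  by apply: Rmult_le_compat_l; lra.
Qed.

Lemma edge_test_sum_self : sumR (fun v => P y v * edge_test v) <= 1 - edge_defect.
Proof.
pose g v := if v == k then edge_defect else 0.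
have Hg : forall v, v <> k -> g v = 0 by move=> v Hv; rewrite /g; case: eqP.
apply: Rle_trans (sumR_le _ (fun v => P y v - g v) _ _) _.
- move=> v; have := edge_test_bounds v; have := stochastic_ge0 P HP y v; split; first nra.
  rewrite /g; case: eqP => [->|_]; last nra.
  have Hk : reaches y k by exists 1%nat; split; [lia | rewrite mpow1].
  have := edge_test_le_inv k Hk.
  have := path_ratio_pos y k; rewrite /edge_defect => Hh Hu.
  have : P y k * edge_test k <= P y k * / path_ratio y k by apply: Rmult_le_compat_l; lra.
  lra.
- exact: summable_minus (stochastic_summable P HP y) (summable_single _ _ Hg).
- rewrite sumR_minus ?(stochastic_sum P HP) ?(sumR_single _ _ Hg) /g ?eqxx.
  + exact: Rle_refl.
  + exact: stochastic_summable.
  + exact: summable_single Hg.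
Qed.

Lemma edge_test_superharmonic : superharmonic P edge_test y edge_defect.
Proof.
move=> w; case: (eqVneq w y) => [->|Hw].
- by rewrite edge_test_self; apply: edge_test_sum_self.
- rewrite Rminus_0_r {2}/edge_test.
  case: (excluded_middle_informative (reaches y w)) => Hreach /=.
  + apply: Rmin_glb; [exact: edge_test_sum_reached | exact: edge_test_sum_le1].
  + exact: edge_test_sum_le1.
Qed.

End EdgeTest.

Lemma ratio1_le1 y k : 0 < P y k -> ratio 1 y k <= 1.
Proof.
move=> Hyk; apply: Rnot_lt_le => Hgt1.
apply: (recurrent_superharmonic_false P HP (edge_test y) 1 y (edge_defect y k) y O RP).
- exact: edge_test_bounds.
- exact: edge_defect_pos.
- exact: edge_test_superharmonic.
- by rewrite mpow0 eqxx; lra.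
Qed.

(* Otherwise the row [Q (sigma y)] would have mass [sum_v P y v / ratio 1 y v > 1]. *)
Lemma ratio1_eq1 y k : 0 < P y k -> ratio 1 y k = 1.
Proof.
move=> Hyk; case: (Rle_lt_or_eq_dec _ _ (ratio1_le1 y k Hyk)) => [Hlt|//]; exfalso.
have Hr := ratio1_pos y k Hyk.
pose eps := P y k * (/ ratio 1 y k - 1).
have Heps : 0 < eps.
{ apply: Rmult_lt_0_compat => //.
  have : 1 < / ratio 1 y k by rewrite -Rinv_1; apply: Rinv_lt_contravar; lra.
  lra. }
have Hs : forall v, v <> k -> (if v == k then eps else 0) = 0 by move=> v Hv; case: eqP.
have [HQs HQ1] := Q_row_sigma y.
have : sumR (fun v => P y v + (if v == k then eps else 0)) <= sumR (fun v => Q (sigma y) (sigma v)).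
{ apply: sumR_le => // v; have := stochastic_ge0 P HP y v => HPyv; split.
    by case: (v == k); lra.
  case: (Rle_lt_or_eq_dec _ _ HPyv) => [Hyv|HPyv0]; last first.
    case: eqP => [Evk|_]; first by move: Hyk; rewrite -Evk -HPyv0; lra.
    by rewrite -HPyv0; have := stochastic_ge0 Q HQ (sigma y) (sigma v); lra.
  rewrite -(P_div_ratio1 y v Hyv); have := ratio1_le1 y v Hyv; have := ratio1_pos y v Hyv.
  case: eqP => [->|_] Hrv Hrv1.
  + by apply: Req_le; rewrite /eps; field; lra.
  + rewrite Rplus_0_r /Rdiv -{1}(Rmult_1_r (P y v)); apply: Rmult_le_compat_l; first lra.
    by rewrite -Rinv_1; apply: Rinv_le_contravar.
}
rewrite sumR_plus ?(stochastic_sum P HP) ?(sumR_single _ _ Hs) ?eqxx; first lra.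
- exact: stochastic_summable.
- exact: summable_single Hs.
Qed.

Lemma stochastic_sigma_eq i j : P i j = Q (sigma i) (sigma j).
Proof.
case: (Rle_lt_or_eq_dec _ _ (stochastic_ge0 P HP i j)) => [Hij|Hij].
- by rewrite -(P_div_ratio1 i j Hij) ratio1_eq1 // Rdiv_1_r.
- rewrite -Hij; case: (Rle_lt_or_eq_dec _ _ (stochastic_ge0 Q HQ (sigma i) (sigma j))) => // HQij.
  by have := mpow_pos_P 1 i j (le_n 1); rewrite !mpow1 => /(_ HQij); lra.
Qed.

End RatioCocycle.

Theorem mainTheorem9 (Om : countType) (P Q : Om -> Om -> R)
  (rho : (Om -> C) -> (Om -> C)) (sigma : Om -> Om) :
  stochastic P -> stochastic Q -> recurrent P -> recurrent Q ->
  star_automorphism rho ->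
  (forall j x, rho (proj j) x = proj (sigma j) x) ->
  (exists V, rho_unitary_iso P Q rho V) ->
  forall i j, P i j = Q (sigma i) (sigma j).
Proof.
move=> HP HQ RP RQ Hrho Hsigma [V HV].
exact: stochastic_sigma_eq HP HQ Hrho Hsigma HV RP RQ.
Qed.
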